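(* Let $X$ be an irreducible continuous-time Markov jump process on a finite state space $K$ with transition rates $k(x,y;\beta)\geq 0$ ($x\neq y$) depending on a real parameter $\beta$, such that $k(x,y;\beta)>0$ iff $k(y,x;\beta)>0$, that this set of pairs does not depend on $\beta>0$, and that for every such pair the limit $\phi(x,y)=\lim_{\beta\to\infty}\frac1\beta\log k(x,y;\beta)$ exists (finite). Let $\mathcal{A}$ be the union of all attractors of $K$. Then for every $y\in K$ there exists $x\in\mathcal{A}$ with $\mathcal{U}(y,x)=0$.
   Context: Make $K$ into a graph with an edge $x\sim y$ iff $x\neq y$ and $k(x,y;\beta)>0$. Define $\Gamma(x)=-\max_{y\sim x}\phi(x,y)$ and, for $x\sim y$, $U(x,y)=-\phi(x,y)-\Gamma(x)\geq 0$; set $U(x,x)=+\infty$. A state $y$ with $U(x,y)=0$ is a preferred successor of $x$. A path $D=(x_0,x_1,\dots,x_n)$ is a sequence with $x_{m}\sim x_{m+1}$, and $U(D)=\sum_{m=0}^{n-1}U(x_m,x_{m+1})$. For $x,y\in K$, $\mathcal{U}(x,y)=\min_D U(D)$ over all paths $D$ from $x$ to $y$. A non-empty set $A\subset K$ is an attractor if $\mathcal{U}(x,y)=0$ for all $x\neq y\in A$ and $\mathcal{U}(x,y)>0$ for all $x\in A$, $y\in K\setminus A$. *)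

From HB Require Import structures.
From mathcomp Require Import all_boot all_order all_algebra.
From mathcomp Require Import all_classical all_reals all_analysis.
Set Implicit Arguments. Unset Strict Implicit. Unset Printing Implicit Defensive.
Import Order.TTheory GRing.Theory Num.Theory.
Local Open Scope ring_scope.
Local Open Scope classical_set_scope.

Section Metastab.
Variables (R : realType) (K : finType).
(* transition rates: k b x y = k(x,y;beta=b) *)
Variable k : R -> K -> K -> R.
Variable phi : K -> K -> R.

Definition edge_at (b : R) : rel K := fun x y => (x != y) && (0 < k b x y).

(* the graph on K: by the beta-independence hypothesis we may evaluate at beta = 1 *)
Definition edge : rel K := edge_at 1.

(* Gamma(x) = - max_{y ~ x} phi(x,y)  (0 if x has no neighbour: never used) *)
Definition Gamma (x : K) : R :=
  - (if [pick y | edge x y] is Some y0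
     then \big[Num.max/phi x y0]_(y | edge x y) phi x y else 0).

Definition Ucost (x y : K) : R := - phi x y - Gamma x.

Fixpoint path_cost (x : K) (s : seq K) : R :=
  if s is y :: s' then Ucost x y + path_cost y s' else 0.

(* calU(x,y) = min over paths D from x to y of U(D) (taken as the infimum) *)
Definition calU (x y : K) : R :=
  inf [set path_cost x s | s in [set s : seq K | path edge x s /\ last x s = y]].

Definition attractor (A : {set K}) : Prop :=
  (exists x, x \in A) /\
  (forall x y, x \in A -> y \in A -> x != y -> calU x y = 0) /\
  (forall x y, x \in A -> y \notin A -> 0 < calU x y).

Definition attractor_union : {set K} :=
  \bigcup_(A : {set K} | `[< attractor A >]) A.

End Metastab.

(* All edge costs U are nonnegative, so calU(x, y) = 0 exactly when y can be
   reached from x by a path of preferred successors: any other path contains an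
   edge of positive cost, and these costs are bounded below by the least of the
   finitely many positive ones.  Hence every terminal class of the
   preferred-successor graph is an attractor.  Starting from y, follow preferred
   successors to a state x whose preferred-reachable set is smallest; that set
   is a terminal class containing x. *)

From HB Require Import structures.
From mathcomp Require Import all_boot all_order all_algebra.
From mathcomp Require Import all_classical all_reals all_analysis.
Import Order.TTheory GRing.Theory Num.Theory.
Import numFieldNormedType.Exports.
Local Open Scope ring_scope.
Local Open Scope classical_set_scope.

Lemma exists_terminal_connect (T : finType) (e : rel T) (y : T) :
  exists2 x, connect e y x & forall w, connect e x w -> connect e w x.
Proof.
case: (@arg_minnP _ y (connect e y) (fun x => #|[set w | connect e x w]%SET|)
  (connect0 _ _)) => x yx xmin.
exists x => // w xw.
have sub : [set v | connect e w v]%SET \subset [set v | connect e x v]%SET.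
  by apply/fintype.subsetP => v; rewrite !inE; apply: connect_trans.
have /eqP same : [set v | connect e w v]%SET == [set v | connect e x v]%SET.
  by rewrite eqEcard sub xmin // (connect_trans yx xw).
by have := connect0 e x; rewrite -[connect e x x]inE -same inE.
Qed.

Section Costs.
Variables (R : realType) (K : finType) (k : R -> K -> K -> R) (phi : K -> K -> R).

Local Notation edge := (edge k).
Local Notation U := (Ucost k phi).
Local Notation calU := (calU k phi).
Local Notation path_cost := (path_cost k phi).

Lemma Ucost_ge0 x y : edge x y -> 0 <= U x y.
Proof.
move=> exy; rewrite /Ucost /Gamma opprK.
case: pickP => [y0 _|/(_ y)]; last by rewrite exy.
by rewrite addrC subr_ge0 (le_bigmax_cond _ _ exy).
Qed.

Lemma path_cost_ge0 x s : path edge x s -> 0 <= path_cost x s.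
Proof.
elim: s x => //= y s IHs x /andP[exy ys].
by rewrite addr_ge0 ?Ucost_ge0 ?IHs.
Qed.

Definition preferred : rel K := fun x y => edge x y && (U x y == 0).

Lemma path_cost_preferred x s : path preferred x s -> path_cost x s = 0.
Proof.
elim: s x => //= y s IHs x /andP[/andP[_ /eqP->] ys].
by rewrite IHs // addr0.
Qed.

Lemma calU_connect_preferred x y : connect preferred x y -> calU x y = 0.
Proof.
move=> /connectP[s xs ys].
have lb0 : lbound [set path_cost x t | t in
    [set t | path edge x t /\ last x t = y]] 0.
  by move=> _ [t [xt _] <-]; exact: path_cost_ge0.
have : [set path_cost x t | t in [set t | path edge x t /\ last x t = y]] 0.
  exists s; last exact: path_cost_preferred.
  by split=> //; apply: sub_path xs => a b /andP[].
move=> mem0; apply/eqP; rewrite eq_le (ge_inf _ mem0) ?lb_le_inf //.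
- by exists 0.
- by exists 0.
Qed.

Definition min_pos_cost : R :=
  \big[Num.min/1]_(p : K * K | edge p.1 p.2 && (0 < U p.1 p.2)) U p.1 p.2.

Lemma min_pos_cost_gt0 : 0 < min_pos_cost.
Proof. by apply: lt_bigmin => // p /andP[]. Qed.

Lemma min_pos_cost_le x y : edge x y -> 0 < U x y -> min_pos_cost <= U x y.
Proof.
move=> exy Upos.
by apply: (bigmin_le_cond _ (j := (x, y))) => /=; rewrite exy Upos.
Qed.

Lemma min_pos_cost_le_path_cost x s :
  path edge x s -> ~~ connect preferred x (last x s) ->
  min_pos_cost <= path_cost x s.
Proof.
elim: s x => [|y s IHs] x /=; first by rewrite connect0.
move=> /andP[exy ys] notpref.
have [U0|Unz] := eqVneq (U x y) 0.
  rewrite U0 add0r IHs //; apply: contra notpref; apply: connect_trans.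
  by apply: connect1; rewrite /preferred exy U0 eqxx.
rewrite -[min_pos_cost]addr0 lerD ?path_cost_ge0 ?min_pos_cost_le //.
by rewrite lt_def Unz Ucost_ge0.
Qed.

Lemma calU_gt0 x y :
  connect edge x y -> ~~ connect preferred x y -> 0 < calU x y.
Proof.
move=> /connectP[s xs ys] notpref.
apply: (lt_le_trans min_pos_cost_gt0); apply: lb_le_inf.
  by exists (path_cost x s), s.
move=> _ [t [xt ty] <-].
by apply: min_pos_cost_le_path_cost; rewrite ?ty.
Qed.

Lemma attractor_terminal_class x :
  (forall u v, connect edge u v) ->
  (forall w, connect preferred x w -> connect preferred w x) ->
  attractor k phi [set w | connect preferred x w]%SET.
Proof.
move=> irred terminal; split; first by exists x; rewrite inE connect0.
split=> u v; rewrite !inE => xu.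
  move=> xv _; apply: calU_connect_preferred.
  exact: connect_trans (terminal u xu) xv.
move=> notxv; apply: calU_gt0 => //.
by apply: contra notxv; apply: connect_trans.
Qed.

End Costs.

Arguments preferred {R K}.

Theorem proposition2 (R : realType) (K : finType) (k : R -> K -> K -> R)
  (phi : K -> K -> R)
  (k_nonneg : forall (b : R) x y, x != y -> 0 <= k b x y)
  (k_sym : forall (b : R) x y, 0 < b -> x != y -> (0 < k b x y <-> 0 < k b y x))
  (k_indep : forall (b b' : R) x y, 0 < b -> 0 < b' -> x != y ->
     (0 < k b x y <-> 0 < k b' x y))
  (k_irred : forall b : R, 0 < b -> forall x y, connect (edge_at k b) x y)
  (phi_lim : forall x y, edge k x y ->
     ln (k b x y) / b @[b --> +oo%R] --> phi x y) :
  forall y : K, exists x : K,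
    x \in attractor_union k phi /\ calU k phi y x = 0.
Proof.
move=> y.
have [x yx terminal] := exists_terminal_connect _ (preferred k phi) y.
exists x; split; last exact: calU_connect_preferred.
apply/bigcupP; exists [set w | connect (preferred k phi) x w]%SET.
  apply/asboolP; apply: attractor_terminal_class terminal.
  exact: k_irred ltr01.
by rewrite inE connect0.
Qed.
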